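(* Let $(A,\mathfrak m)$ be a Noetherian local ring with infinite residue field, $\mathfrak q$ an $\mathfrak m$-primary ideal, $M$ a finitely generated $A$-module of dimension $d$, $\mathbb M=\{M_j\}_{j\ge0}$ a good $\mathfrak q$-filtration of $M$, and $J$ the ideal generated by a maximal $\mathbb M$-superficial sequence for $\mathfrak q$. Let $S_J(\mathbb M)=\bigoplus_{n\ge1}M_{n+1}/J^nM_1$ be the Sally module. If $\dim S_J(\mathbb M)=d$, then $$e_0(S_J(\mathbb M))\le\sum_{j\ge1}v_j(\mathbb M)=\sum_{j\ge1}\lambda(M_{j+1}/JM_j).$$
   Context: $\lambda$ denotes length. A $\mathfrak q$-filtration of $M$ is a chain of submodules $M=M_0\supseteq M_1\supseteq\cdots$ with $\mathfrak qM_j\subseteq M_{j+1}$; it is good if $M_{j+1}=\mathfrak qM_j$ for $j\gg0$. An element $a\in\mathfrak q$ is $\mathbb M$-superficial for $\mathfrak q$ if there is $c\ge0$ with $(M_{j+1}:_Ma)\cap M_c=M_j$ for all $j\ge c$. A sequence $a_1,\dots,a_r$ is $\mathbb M$-superficial for $\mathfrak q$ if each $a_i$ is superficial for $\mathfrak q$ with respect to the filtration $\{(M_j+(a_1,\dots,a_{i-1})M)/(a_1,\dots,a_{i-1})M\}_j$ of $M/(a_1,\dots,a_{i-1})M$; it is maximal when $r=d$. The Sally module $S_J(\mathbb M)$ is a graded module over the Rees algebra $A[Jt]=\bigoplus_{n\ge0}J^nt^n$ (with $J^kt^k$ mapping $M_{n+1}/J^nM_1$ to $M_{n+k+1}/J^{n+k}M_1$);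 its dimension is its Krull dimension as such. Its Hilbert series is $P_{S_J(\mathbb M)}(z)=\sum_{n\ge1}\lambda(M_{n+1}/J^nM_1)z^n$; when $\dim S_J(\mathbb M)=d$ one writes $P_{S_J(\mathbb M)}(z)=h(z)/(1-z)^d$ with $h\in\mathbb Z[z]$ and $e_0(S_J(\mathbb M))=h(1)$. *)

From mathcomp Require Import all_boot all_order all_algebra.
Set Implicit Arguments. Unset Strict Implicit. Unset Printing Implicit Defensive.
Import Order.TTheory GRing.Theory Num.Theory.
Local Open Scope ring_scope.

Definition subp {T : Type} (P Q : T -> Prop) := forall x, P x -> Q x.
Definition eqp {T : Type} (P Q : T -> Prop) := forall x, P x <-> Q x.
Definition ssubp {T : Type} (P Q : T -> Prop) :=
  subp P Q /\ exists x, Q x /\ ~ P x.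

Section Alg.
Variable A : comNzRingType.

(* I is an ideal of the subring with carrier C (C = everything for A). *)
Definition idealIn (C I : A -> Prop) :=
  subp I C /\ I 0 /\ (forall x y, I x -> I y -> I (x - y)) /\
  (forall c x, C c -> I x -> I (c * x)).
Definition ideal (I : A -> Prop) := idealIn (fun _ => True) I.

Definition primeIn (C P : A -> Prop) :=
  idealIn C P /\ ~ P 1 /\ (forall x y, C x -> C y -> P (x * y) -> P x \/ P y).

Definition maximal_ideal (I : A -> Prop) :=
  ideal I /\ ~ I 1 /\
  forall K, ideal K -> subp I K -> eqp K I \/ K 1.

Definition noetherian :=
  forall I : nat -> A -> Prop, (forall n, ideal (I n)) ->
  (forall n, subp (I n) (I n.+1)) ->
  exists N, forall n, (N <= n)%N -> eqp (I n) (I N).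

Definition local_ring (m : A -> Prop) :=
  maximal_ideal m /\ forall m', maximal_ideal m' -> eqp m' m.

(* the residue field A/m is infinite: no finite list represents all classes *)
Definition infinite_residue (m : A -> Prop) :=
  forall s : seq A, exists x, forall y, y \in s -> ~ m (x - y).

Definition radical (I : A -> Prop) x := exists n, I (x ^+ n).

Definition primary_ideal (I : A -> Prop) :=
  ideal I /\ ~ I 1 /\ forall x y, I (x * y) -> ~ I x -> radical I y.

Definition m_primary (m q : A -> Prop) := primary_ideal q /\ eqp (radical q) m.

Definition idealprod (I K : A -> Prop) x :=
  exists s : seq (A * A), (forall p, p \in s -> I p.1 /\ K p.2) /\
    x = \sum_(p <- s) p.1 * p.2.

Fixpoint idealpow (I : A -> Prop) (n : nat) : A -> Prop :=
  match n with 0 => fun _ => True | n'.+1 => idealprod I (idealpow I n') end.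

Definition gen_ideal (s : seq A) x :=
  exists c : seq A, x = \sum_(i < size s) c`_i * s`_i.

Definition prime_chain (C I : A -> Prop) (n : nat) :=
  exists p : nat -> A -> Prop,
    (forall i, (i <= n)%N -> primeIn C (p i) /\ subp I (p i)) /\
    (forall i, (i < n)%N -> ssubp (p i) (p i.+1)).

(* Krull dimension of C/I equals d *)
Definition krull_dim_eq (C I : A -> Prop) (d : nat) :=
  prime_chain C I d /\ ~ prime_chain C I d.+1.

Section Mod.
Variable M : lmodType A.

Definition submodule (N : M -> Prop) :=
  N 0 /\ (forall x y, N x -> N y -> N (x + y)) /\ (forall c x, N x -> N (c *: x)).

Definition addsub (N K : M -> Prop) x := exists y z, N y /\ K z /\ x = y + z.

Definition modprod (I : A -> Prop) (N : M -> Prop) x :=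
  exists s : seq (A * M), (forall p, p \in s -> I p.1 /\ N p.2) /\
    x = \sum_(p <- s) p.1 *: p.2.

Definition fin_gen :=
  exists s : seq M, forall x, exists c : seq A, x = \sum_(i < size s) c`_i *: s`_i.

Definition annihilator (a : A) := forall x : M, a *: x = 0.

(* dimension of M = Krull dimension of A / Ann(M) *)
Definition module_dim_eq (d : nat) := krull_dim_eq (fun _ => True) annihilator d.

(* lambda(P/Q) = k, for submodules Q of P: maximal length of strict chains *)
Definition schain (Q P : M -> Prop) (k : nat) :=
  exists N : nat -> M -> Prop,
    eqp (N 0%N) Q /\ eqp (N k) P /\ (forall i, submodule (N i)) /\
    (forall i, (i < k)%N -> ssubp (N i) (N i.+1)).
Definition length_eq (P Q : M -> Prop) (k : nat) :=
  schain Q P k /\ ~ schain Q P k.+1.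

Definition qfiltration (q : A -> Prop) (F : nat -> M -> Prop) :=
  (forall x, F 0%N x) /\ (forall j, submodule (F j)) /\
  (forall j, subp (F j.+1) (F j)) /\ (forall j, subp (modprod q (F j)) (F j.+1)).
Definition good_qfiltration q F :=
  qfiltration q F /\ exists n0, forall j, (n0 <= j)%N -> eqp (F j.+1) (modprod q (F j)).

(* a is superficial for q w.r.t. the induced filtration on M/K,
   K a submodule; statement pulled back along M -> M/K. *)
Definition superficial_mod (q : A -> Prop) (F : nat -> M -> Prop) (K : M -> Prop) (a : A) :=
  q a /\ exists c, forall j, (c <= j)%N -> forall x,
    (addsub (F j.+1) K (a *: x) /\ addsub (F c) K x) <-> addsub (F j) K x.

Definition superficial_seq q F (s : seq A) :=
  forall i, (i < size s)%N ->
    superficial_mod q F (modprod (gen_ideal (take i s)) (fun _ => True)) s`_i.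

(* Rees algebra A[Jt] as a subring of {poly A} *)
Definition rees (J : A -> Prop) (p : {poly A}) := forall k, idealpow J k p`_k.

End Mod.
End Alg.

Section Sally.
Variables (A : comNzRingType) (M : lmodType A).

(* annihilator in A[Jt] of the Sally module (+)_{n>=1} F_{n+1}/J^n F_1;
   J^k t^k sends degree n to degree n+k. *)
Definition sally_ann (J : A -> Prop) (F : nat -> M -> Prop) (p : {poly A}) :=
  rees J p /\ forall k n x, (1 <= n)%N -> F n.+1 x ->
     modprod (idealpow J (n + k)) (F 1%N) (p`_k *: x).

Definition sally_dim_eq J F d :=
  @krull_dim_eq {poly A} (rees J) (sally_ann J F) d.
End Sally.

(* Filter [J^n M_1 <= J^(n-1) M_2 <= ... <= J M_n <= M_(n+1)]. Modulo the next smaller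
   term, the step [J^(n-j) M_(j+1)] is covered by the images of [M_(j+1) / J M_j] under the
   [C(n-j+d-1, d-1)] monomials of degree [n-j] in the [d] generators of [J], so
   [lambda(M_(n+1) / J^n M_1) <= sum_j C(n-j+d-1, d-1) v_j]: the Hilbert series of the Sally
   module is dominated coefficientwise by [V(z) / (1-z)^d], with [V(z) = sum_(j>=1) v_j z^j].
   Hence [(V(z) - h(z)) / (1-z)^d] has nonnegative coefficients. When only finitely many [v_j]
   are nonzero its numerator is a polynomial, and [d]-fold partial sums of a finite sequence
   with negative total eventually become negative, so [V(1) >= h(1)]. Otherwise the partial
   sums of the [v_j] are unbounded. *)

From mathcomp Require Import all_boot all_order all_algebra.
From Stdlib Require Import Classical FunctionalExtensionality.
From mathcomp Require Import zify.
Import Order.TTheory GRing.Theory Num.Theory.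
Set Implicit Arguments. Unset Strict Implicit. Unset Printing Implicit Defensive.
Local Open Scope ring_scope.

Section PredInclusion.
Variable T : Type.
Implicit Types P Q R : T -> Prop.

Lemma subp_trans P Q R : subp P Q -> subp Q R -> subp P R.
Proof. by move=> hPQ hQR x /hPQ /hQR. Qed.

Lemma ssubpW P Q : ssubp P Q -> subp P Q.
Proof. by case. Qed.

Lemma subp_ssubp_trans P Q R : subp P Q -> ssubp Q R -> ssubp P R.
Proof.
move=> hPQ [hQR [x [Rx nQx]]]; split; first exact: subp_trans hQR.
by exists x; split=> // /hPQ.
Qed.

Lemma ssubp_subp_trans P Q R : ssubp P Q -> subp Q R -> ssubp P R.
Proof.
move=> [hPQ [x [Qx nPx]]] hQR; split; first exact: subp_trans hQR.
by exists x; split=> //; apply: hQR.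
Qed.

Lemma subp_not_ssubp P Q : subp P Q -> ~ ssubp P Q -> subp Q P.
Proof.
move=> hPQ nPQ x Qx; apply: NNPP => nPx.
by apply: nPQ; split=> //; exists x.
Qed.

End PredInclusion.

Section SubmoduleChains.
Variables (A : comNzRingType) (M : lmodType A).
Implicit Types (P Q R X Y : M -> Prop) (N : nat -> M -> Prop).

Lemma submod0 X : submodule X -> X 0.
Proof. by case. Qed.

Lemma submodD X x y : submodule X -> X x -> X y -> X (x + y).
Proof. by case=> _ [hD _]; apply: hD. Qed.

Lemma submodZ X c x : submodule X -> X x -> X (c *: x).
Proof. by case=> _ [_ hZ]; apply: hZ. Qed.

Lemma submodB X x y : submodule X -> X x -> X y -> X (x - y).
Proof. by move=> sX Xx Xy; rewrite -scaleN1r; apply: submodD => //; apply: submodZ. Qed.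

Lemma submod_sum X (I : Type) (r : seq I) (P : pred I) (f : I -> M) :
  submodule X -> (forall i, P i -> X (f i)) -> X (\sum_(i <- r | P i) f i).
Proof. by move=> sX; apply: big_ind => //; [apply: submod0 | move=> x y; apply: submodD]. Qed.

Definition capsub X Y x := X x /\ Y x.

Lemma submod_capsub X Y : submodule X -> submodule Y -> submodule (capsub X Y).
Proof.
move=> sX sY; split; first by split; apply: submod0.
split; first by move=> x y [? ?] [? ?]; split; apply: submodD.
by move=> c x [? ?]; split; apply: submodZ.
Qed.

Lemma submod_addsub X Y : submodule X -> submodule Y -> submodule (addsub X Y).
Proof.
move=> sX sY; split.
  by exists 0, 0; rewrite addr0; split; [apply: submod0 | split=> //; apply: submod0].
split.
  move=> _ _ [x1 [y1 [Xx1 [Yy1 ->]]]] [x2 [y2 [Xx2 [Yy2 ->]]]].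
  exists (x1 + x2), (y1 + y2); rewrite addrACA.
  by split; [apply: submodD | split=> //; apply: submodD].
move=> c _ [x [y [Xx [Yy ->]]]]; exists (c *: x), (c *: y); rewrite scalerDr.
by split; [apply: submodZ | split=> //; apply: submodZ].
Qed.

Lemma submod_preimZ X c : submodule X -> submodule (fun x => X (c *: x)).
Proof.
move=> sX; split; first by rewrite scaler0; apply: submod0.
split; first by move=> x y Xx Xy; rewrite scalerDr; apply: submodD.
by move=> a x Xx; rewrite scalerA mulrC -scalerA; apply: submodZ.
Qed.

(* The modular law. *)
Lemma submod_sub_of_capsub_addsub X Y R : submodule X -> submodule Y -> submodule R ->
  subp X Y -> subp (capsub Y R) X -> subp (addsub Y R) (addsub X R) -> subp Y X.
Proof.
move=> sX sY sR hXY hcap hadd z Yz.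
have [x [r [Xx [Rr zE]]]] : addsub X R z.
  by apply: hadd; exists z, 0; rewrite addr0; split=> //; split=> //; apply: submod0.
have Yr : Y r.
  by rewrite (_ : r = z - x); [apply: submodB => //; apply: hXY | rewrite zE addrC addKr].
by rewrite zE; apply: submodD => //; apply: hcap.
Qed.

Definition submod_chain N k :=
  (forall i, (i <= k)%N -> submodule (N i)) /\
  (forall i, (i < k)%N -> ssubp (N i) (N i.+1)).

Definition chain_between Q P k :=
  exists N, submod_chain N k /\ subp Q (N 0%N) /\ subp (N k) P.

Definition length_le Q P b := forall k, chain_between Q P k -> (k <= b)%N.

Lemma submod_chain_mono N k i j : submod_chain N k -> (i <= j <= k)%N -> subp (N i) (N j).
Proof.
move=> [_ hN] /andP[hij hjk]; elim: j hij hjk => [|j IH]; first by rewrite leqn0 => /eqP-> _.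
rewrite leq_eqVlt => /orP[/eqP-> _ //|]; rewrite ltnS => hij hjk.
exact: subp_trans (IH hij (ltnW hjk)) (ssubpW (hN j hjk)).
Qed.

Lemma chain_between0 Q P : submodule P -> subp Q P -> chain_between Q P 0.
Proof. by move=> sP hQP; exists (fun _ => P); split=> //; split. Qed.

Lemma chain_between_sub Q P P' k : subp P P' -> chain_between Q P k -> chain_between Q P' k.
Proof. by move=> hP [N [cN [hQ hk]]]; exists N; split=> //; split=> //; apply: subp_trans hP. Qed.

Lemma chain_between_rcons Q P P' k : submodule P' -> ssubp P P' ->
  chain_between Q P k -> chain_between Q P' k.+1.
Proof.
move=> sP' hPP' [N [[sN hN] [hQ hk]]].
exists (fun i => if (i <= k)%N then N i else P'); rewrite leq0n ltnn.
split; last by split.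
split; first by move=> i _; case: ifP => // /sN.
move=> i; rewrite ltnS => hik; rewrite hik.
case: ltngtP hik => [hik _|//|-> _]; first exact: hN.
exact: subp_ssubp_trans hPP'.
Qed.

Lemma length_le_mono Q P Q' P' b : subp Q Q' -> subp P' P ->
  length_le Q P b -> length_le Q' P' b.
Proof.
move=> hQ hP hb k [N [cN [hQ' hk]]]; apply: hb; exists N.
by split=> //; split; [apply: subp_trans hQ' | apply: subp_trans hP].
Qed.

Lemma chain_between_trunc Q P k j : (j <= k)%N -> chain_between Q P k -> chain_between Q P j.
Proof.
move=> hjk [N [cN [hQ hk]]]; exists N; split; last first.
  by split=> //; apply: subp_trans hk; apply: submod_chain_mono cN _; rewrite hjk leqnn.
by case: cN => sN hN; split=> i hi; [apply: sN | apply: hN]; apply: leq_trans hjk.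
Qed.

Lemma schain_of_chain_between Q P k : submodule Q -> submodule P -> (0 < k)%N ->
  chain_between Q P k -> schain Q P k.
Proof.
move=> sQ sP k_gt0 [N [cN [hQ hk]]].
pose N' i := if i == 0%N then Q else if (i < k)%N then N i else P.
have N'N i : (i < k)%N -> subp (N' i) (N i).
  by rewrite /N'; case: eqP => [-> _ //|_ ->].
have NN' i : (i < k)%N -> subp (N i.+1) (N' i.+1).
  rewrite /N' /=; case: (ltnP i.+1 k) => [_ _ x // | hki hik].
  by have <- : k = i.+1 by lia.
exists N'; split; first by rewrite /N' eqxx.
split; first by rewrite /N' ltnn (negbTE (lt0n_neq0 k_gt0)).
split.
  move=> i; rewrite /N'; case: eqP => // _; case: ltnP => // hik.
  by apply: (proj1 cN); apply: ltnW.
move=> i hik; apply: subp_ssubp_trans (N'N i hik) _.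
exact: ssubp_subp_trans (proj2 cN i hik) (NN' i hik).
Qed.

Lemma chain_between_of_schain Q P k : schain Q P k -> chain_between Q P k.
Proof.
move=> [N [N0 [Nk [sN hN]]]]; exists N.
by split; [split | split=> x; [move/(N0 x) | move/(Nk x)]].
Qed.

Lemma length_le_of_length_eq Q P v : submodule Q -> submodule P ->
  length_eq P Q v -> length_le Q P v.
Proof.
move=> sQ sP [_ hnot] k hk; rewrite leqNgt; apply/negP => hvk; apply: hnot.
exact: schain_of_chain_between (chain_between_trunc hvk hk).
Qed.

Lemma submod_chain_split Q R N k : submodule R -> submod_chain N k ->
  subp Q (N 0%N) -> subp Q R ->
  exists s t, [/\ (s + t = k)%N, chain_between Q (capsub (N k) R) s
                & chain_between R (addsub (N k) R) t].
Proof.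
move=> sR + hQ hQR; elim: k => [|k IH] cN.
  have sN0 := proj1 cN 0%N (leqnn 0).
  exists 0%N, 0%N; split=> //; apply: chain_between0.
  - exact: submod_capsub.
  - by move=> x Qx; split; [apply: hQ | apply: hQR].
  - exact: submod_addsub.
  - by move=> x Rx; exists 0, x; rewrite add0r; split; [apply: submod0 | split].
have cN' : submod_chain N k.
  by case: cN => sN hN; split=> i hi; [apply: sN | apply: hN]; apply: leqW.
have [s [t [stk CI CS]]] := IH cN'.
have sNk := proj1 cN k (leqnSn k); have sNk1 := proj1 cN k.+1 (leqnn _).
have hk := proj2 cN k (leqnn _).
have hcap : subp (capsub (N k) R) (capsub (N k.+1) R).
  by move=> x [Nkx Rx]; split=> //; apply: (ssubpW hk).
have hadd : subp (addsub (N k) R) (addsub (N k.+1) R).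
  by move=> _ [x [r [Nkx [Rr ->]]]]; exists x, r; split=> //; apply: (ssubpW hk).
have [scap|nscap] := classic (ssubp (capsub (N k) R) (capsub (N k.+1) R)).
  exists s.+1, t; split; [by rewrite addSn stk | | exact: chain_between_sub hadd CS].
  by apply: (chain_between_rcons _ scap CI); apply: submod_capsub.
have [sadd|nsadd] := classic (ssubp (addsub (N k) R) (addsub (N k.+1) R)).
  exists s, t.+1; split; [by rewrite addnS stk | exact: chain_between_sub hcap CI |].
  by apply: (chain_between_rcons _ sadd CS); apply: submod_addsub.
have [_ [x [Nk1x nNkx]]] := hk; exfalso; apply: nNkx.
apply: (submod_sub_of_capsub_addsub sNk sNk1 sR (ssubpW hk)) => //.
  by apply: subp_trans (subp_not_ssubp hcap nscap) _ => y [].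
exact: subp_not_ssubp hadd nsadd.
Qed.

Lemma length_le_add Q R P a b : submodule P -> submodule R -> subp Q R -> subp R P ->
  length_le Q R a -> length_le R P b -> length_le Q P (a + b).
Proof.
move=> sP sR hQR hRP ha hb k [N [cN [hQ hk]]].
have [s [t [stk CI CS]]] := submod_chain_split sR cN hQ hQR.
rewrite -stk; apply: leq_add; [apply: ha | apply: hb].
  by apply: (chain_between_sub _ CI) => x [].
apply: (chain_between_sub _ CS) => _ [x [r [Nkx [Rr ->]]]].
by apply: submodD => //; [apply: hk | apply: hRP].
Qed.

Lemma length_le_refl X : length_le X X 0.
Proof.
move=> k [N [cN [hX hk]]]; rewrite leqn0; apply/negPn/negP; rewrite -lt0n => k_gt0.
have [_ [x [N1x nN0x]]] := proj2 cN 0%N k_gt0.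
have N1k : subp (N 1%N) (N k) by apply: submod_chain_mono cN _; rewrite k_gt0 leqnn.
by apply: nN0x; apply/hX/hk/N1k.
Qed.

Lemma length_le_telescope (R : nat -> M -> Prop) (b : nat -> nat) n :
  (forall j, submodule (R j)) ->
  (forall j, (j < n)%N -> subp (R j) (R j.+1)) ->
  (forall j, (j < n)%N -> length_le (R j) (R j.+1) (b j)) ->
  length_le (R 0%N) (R n) (\sum_(j < n) b j).
Proof.
move=> sR; elim: n => [|n IH] hR hb; first by rewrite big_ord0; apply: length_le_refl.
have hR0 j : (j <= n)%N -> subp (R 0%N) (R j).
  elim: j => [_ x //|j IHj] hj; apply: (subp_trans (IHj (ltnW hj))).
  by apply: hR; apply: leqW.
rewrite big_ord_recr /=.
apply: (length_le_add (sR _) (sR _) (hR0 n (leqnn n)) (hR n _) _ (hb n _)) => //.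
by apply: IH => j hj; [apply: hR | apply: hb]; apply: leqW.
Qed.

Lemma length_le_scale c Y X R P b : submodule X -> subp Y X ->
  (forall y, Y y -> R (c *: y)) -> (forall z, P z -> exists x r, [/\ X x, R r & z = c *: x + r]) ->
  length_le Y X b -> length_le R P b.
Proof.
move=> sX hYX hYR hP hb k [N [cN [hR hk]]]; apply: hb.
exists (fun i => capsub X (fun x => N i (c *: x))); split; last first.
  split=> [y Yy | x [Xx _] //]; split; [apply: hYX | apply/hR/hYR] => //.
split=> i hi; first exact: submod_capsub (submod_preimZ c (proj1 cN i hi)).
have [hNi [z [Ni1z nNiz]]] := proj2 cN i hi.
have sNi := proj1 cN i (ltnW hi); have sNi1 := proj1 cN i.+1 hi.
split; first by move=> x [Xx Nicx]; split=> //; apply: hNi.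
have Ni1k : subp (N i.+1) (N k) by apply: submod_chain_mono cN _; rewrite hi leqnn.
have N0i : subp (N 0%N) (N i) by apply: submod_chain_mono cN _; rewrite leq0n ltnW.
have [x [r [Xx Rr zE]]] := hP z (hk z (Ni1k z Ni1z)).
have Nir : N i r by apply/N0i/hR.
exists x; split.
  split=> //; rewrite (_ : c *: x = z - r); last by rewrite zE addrK.
  by apply: submodB => //; apply: hNi.
by move=> [_ Nicx]; apply: nNiz; rewrite zE; apply: submodD.
Qed.

End SubmoduleChains.

Section Ideals.
Variable A : comNzRingType.
Implicit Types (I K : A -> Prop) (s t u : seq A).

Lemma ideal_intro I : I 0 -> (forall x y, I x -> I y -> I (x - y)) ->
  (forall c x, I x -> I (c * x)) -> ideal I.
Proof. by move=> I0 IB IM; split=> //; split=> //; split=> // c x _; apply: IM. Qed.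

Lemma ideal0 I : ideal I -> I 0.
Proof. by case=> _ []. Qed.

Lemma idealB I x y : ideal I -> I x -> I y -> I (x - y).
Proof. by case=> _ [_ [IB _]]; apply: IB. Qed.

Lemma idealMl I c x : ideal I -> I x -> I (c * x).
Proof. by case=> _ [_ [_ IM]]; apply: IM. Qed.

Lemma idealD I x y : ideal I -> I x -> I y -> I (x + y).
Proof.
move=> iI Ix Iy; rewrite -[y]opprK -[- y]sub0r.
by apply: idealB => //; apply: idealB => //; apply: ideal0.
Qed.

Lemma ideal_sum I (T : Type) (r : seq T) (P : pred T) (f : T -> A) :
  ideal I -> (forall i, P i -> I (f i)) -> I (\sum_(i <- r | P i) f i).
Proof. by move=> iI; apply: big_ind => //; [apply: ideal0 | move=> x y; apply: idealD]. Qed.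

Lemma gen_idealP s x : gen_ideal s x <-> exists f : nat -> A, x = \sum_(i < size s) f i * s`_i.
Proof.
split=> [[c ->] | [f ->]]; first by exists (fun i => c`_i).
by exists (mkseq f (size s)); apply: eq_bigr => i _; rewrite nth_mkseq.
Qed.

Lemma ideal_gen_ideal s : ideal (gen_ideal s).
Proof.
apply: ideal_intro.
- by apply/gen_idealP; exists (fun _ => 0); rewrite big1 // => i _; rewrite mul0r.
- move=> _ _ /gen_idealP[f ->] /gen_idealP[g ->]; apply/gen_idealP.
  by exists (fun i => f i - g i); rewrite -sumrB; apply: eq_bigr => i _; rewrite mulrBl.
- move=> c _ /gen_idealP[f ->]; apply/gen_idealP; exists (fun i => c * f i).
  by rewrite mulr_sumr; apply: eq_bigr => i _; rewrite mulrA.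
Qed.

Lemma gen_ideal_mem s x : x \in s -> gen_ideal s x.
Proof.
move=> sx; have si : (index x s < size s)%N by rewrite index_mem.
apply/gen_idealP; exists (fun j => (j == index x s)%:R).
rewrite (bigD1 (Ordinal si)) //= eqxx mul1r nth_index // big1 ?addr0 // => j ji.
rewrite (_ : (j == _ :> nat) = false) ?mul0r //.
by apply: contraNF ji => /eqP ji; apply/eqP/val_inj.
Qed.

Lemma gen_ideal_ind s (P : A -> Prop) : P 0 -> (forall x y, P x -> P y -> P (x + y)) ->
  (forall c y, y \in s -> P (c * y)) -> forall x, gen_ideal s x -> P x.
Proof.
move=> P0 PD PM x /gen_idealP[f ->].
by apply: (big_ind P) => // i _; apply: PM; apply: mem_nth.
Qed.

Lemma gen_ideal_min s I : ideal I -> (forall y, y \in s -> I y) -> subp (gen_ideal s) I.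
Proof.
move=> iI sI; apply: gen_ideal_ind; first exact: ideal0.
  by move=> x y; apply: idealD.
by move=> c y /sI; apply: idealMl.
Qed.

Lemma gen_ideal_subset s t : {subset s <= t} -> subp (gen_ideal s) (gen_ideal t).
Proof. by move=> st; apply: gen_ideal_min (ideal_gen_ideal t) _ => y /st /gen_ideal_mem. Qed.

Lemma gen_idealMl x s z : gen_ideal s z -> gen_ideal (map (fun y => x * y) s) (x * z).
Proof.
move=> /gen_idealP[f ->]; apply/gen_idealP; exists f; rewrite size_map mulr_sumr.
by apply: eq_bigr => i _; rewrite (nth_map 0) // mulrCA.
Qed.

Lemma gen_idealM s t u y z : (forall y z, y \in s -> z \in t -> gen_ideal u (y * z)) ->
  gen_ideal s y -> gen_ideal t z -> gen_ideal u (y * z).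
Proof.
move=> st_u sy tz; have iu := ideal_gen_ideal u.
move: y sy; apply: gen_ideal_ind => [|y1 y2|c y1 sy1]; first by rewrite mul0r; apply: ideal0.
  by rewrite mulrDl; apply: idealD.
rewrite -mulrA; apply: idealMl => //; move: z tz; apply: gen_ideal_ind => [|z1 z2|c' z1 tz1].
- by rewrite mulr0; apply: ideal0.
- by rewrite mulrDr; apply: idealD.
by rewrite mulrCA; apply: idealMl => //; apply: st_u.
Qed.

Lemma idealprod_mul I K x y : I x -> K y -> idealprod I K (x * y).
Proof.
by move=> Ix Ky; exists [:: (x, y)]; rewrite big_seq1; split=> // p; rewrite inE => /eqP->.
Qed.

Lemma ideal_idealprod I K : ideal I -> ideal (idealprod I K).
Proof.
move=> iI; have idealprodMl c x : idealprod I K x -> idealprod I K (c * x).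
  move=> [s [hs ->]]; exists [seq (c * p.1, p.2) | p <- s]; split.
    by move=> _ /mapP[p /hs[Ip Kp] ->]; split=> //; apply: idealMl.
  by rewrite big_map mulr_sumr; apply: eq_bigr => p _; rewrite mulrA.
apply: ideal_intro => [|x y|//]; first by exists [::]; rewrite big_nil.
move=> [s1 [hs1 ->]] /(idealprodMl (-1))[s2 [hs2 sE]].
exists (s1 ++ s2); rewrite big_cat -sE mulN1r; split=> // p.
by rewrite mem_cat => /orP[/hs1 | /hs2].
Qed.

Lemma ideal_idealpow I k : ideal I -> ideal (idealpow I k).
Proof. by case: k => [|k] iI /=; [apply: ideal_intro | apply: ideal_idealprod]. Qed.

Lemma idealprod_mono I I' K K' : subp I I' -> subp K K' -> subp (idealprod I K) (idealprod I' K').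
Proof. by move=> II' KK' x [s [hs ->]]; exists s; split=> // p /hs[/II' ? /KK' ?]. Qed.

Lemma idealpow_mono I I' k : subp I I' -> subp (idealpow I k) (idealpow I' k).
Proof. by move=> II'; elim: k => [|k IH] //= x; apply: idealprod_mono. Qed.

(* The monomials of degree [k] in the entries of [a], one for each multiset of [k]
   indices, so that [size (monomials k a)] only depends on [k] and [size a]. *)
Fixpoint monomials (k : nat) (a : seq A) : seq A :=
  match k with
  | 0 => [:: 1]
  | k'.+1 => (fix mk a := if a is x :: a' then
                map (fun y => x * y) (monomials k' (x :: a')) ++ mk a' else [::]) a
  end.

Lemma monomialsS k x a :
  monomials k.+1 (x :: a) = map (fun y => x * y) (monomials k (x :: a)) ++ monomials k.+1 a.
Proof. by []. Qed.

Lemma monomials_idealpow k a m : m \in monomials k a -> idealpow (gen_ideal a) k m.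
Proof.
elim: k a m => [|k IHk] a m //; elim: a m => [|x a IHa] m //.
rewrite monomialsS mem_cat => /orP[/mapP[y ky ->] | km].
  by apply: idealprod_mul; [apply: gen_ideal_mem; rewrite mem_head | apply: IHk].
apply: (idealpow_mono (k := k.+1) _ (IHa m km)).
by apply: gen_ideal_subset => y ay; rewrite inE ay orbT.
Qed.

Lemma monomials_mul_gen_ideal a k i m : (i < size a)%N -> m \in monomials k a ->
  gen_ideal (monomials k.+1 a) (a`_i * m).
Proof.
elim: a k i m => [|x a IHa] k [|i] m // ia.
  by move=> km; apply: gen_ideal_mem; rewrite monomialsS mem_cat (map_f (fun y => x * y)).
have a_sub kk : {subset monomials kk a <= monomials kk (x :: a)}.
  by case: kk => [//|kk] y ay; rewrite monomialsS mem_cat ay orbT.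
elim: k m => [|k IHk] m.
  by rewrite inE => /eqP->; apply: (gen_ideal_subset (a_sub 1%N)); apply: IHa; rewrite ?inE.
rewrite monomialsS mem_cat => /orP[/mapP[m' km' ->] | km].
  rewrite mulrCA; apply: (gen_ideal_subset _ (gen_idealMl x (IHk m' km'))).
  by move=> y xy; rewrite (monomialsS k.+1) mem_cat xy.
exact: (gen_ideal_subset (a_sub _) (IHa _ _ _ ia km)).
Qed.

Lemma idealpow_gen_ideal_monomials k a p :
  idealpow (gen_ideal a) k p -> gen_ideal (monomials k a) p.
Proof.
elim: k p => [|k IHk] p /=.
  move=> _; rewrite -[p]mulr1; apply: idealMl; first exact: ideal_gen_ideal.
  by apply: gen_ideal_mem; rewrite inE.
move=> [s [hs ->]]; rewrite big_seq; apply: ideal_sum; first exact: ideal_gen_ideal.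
move=> q /hs[aq1 akq2]; apply: gen_idealM aq1 (IHk _ akq2) => y z ay kz.
by rewrite -(nth_index 0 ay); apply: monomials_mul_gen_ideal; rewrite ?index_mem.
Qed.

End Ideals.

Section ModuleProducts.
Variables (A : comNzRingType) (M : lmodType A).
Implicit Types (I : A -> Prop) (P X Y : M -> Prop).

Lemma modprod_mem I X p x : I p -> X x -> modprod I X (p *: x).
Proof.
by move=> Ip Xx; exists [:: (p, x)]; rewrite big_seq1; split=> // q; rewrite inE => /eqP->.
Qed.

Lemma modprod_min I X P : submodule P -> (forall p x, I p -> X x -> P (p *: x)) ->
  subp (modprod I X) P.
Proof.
by move=> sP IXP _ [s [hs ->]]; rewrite big_seq; apply: submod_sum => // p /hs[]; apply: IXP.
Qed.

Lemma modprod_mono I I' X : subp I I' -> subp (modprod I X) (modprod I' X).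
Proof. by move=> II' x [s [hs ->]]; exists s; split=> // p /hs[/II']. Qed.

Lemma submodule_modprod I X : ideal I -> submodule (modprod I X).
Proof.
move=> iI; split; first by exists [::]; rewrite big_nil.
split.
  move=> _ _ [s1 [hs1 ->]] [s2 [hs2 ->]]; exists (s1 ++ s2); rewrite big_cat; split=> // p.
  by rewrite mem_cat => /orP[/hs1 | /hs2].
move=> c _ [s [hs ->]]; exists [seq (c * p.1, p.2) | p <- s]; split.
  by move=> _ /mapP[p /hs[Ip Xp] ->]; split=> //; apply: idealMl.
by rewrite big_map scaler_sumr; apply: eq_bigr => p _; rewrite scalerA.
Qed.

Lemma modprod_idealpowS a k X Y : submodule X -> subp (modprod (gen_ideal a) Y) X ->
  subp (modprod (idealpow (gen_ideal a) k.+1) Y) (modprod (idealpow (gen_ideal a) k) X).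
Proof.
move=> sX JYX; have sJX := submodule_modprod X (ideal_idealpow k (ideal_gen_ideal a)).
apply: modprod_min => // _ y [s [hs ->]] Yy; rewrite scaler_suml big_seq.
apply: submod_sum => // p /hs[ap1 akp2]; rewrite mulrC -scalerA.
by apply: modprod_mem => //; apply/JYX/modprod_mem.
Qed.

Definition addsub_lincomb P (L : seq A) X (t : nat) :=
  addsub P (fun z => exists xs : nat -> M, (forall l, X (xs l)) /\ z = \sum_(l < t) L`_l *: xs l).

Lemma submodule_addsub_lincomb P L X t : submodule P -> submodule X ->
  submodule (addsub_lincomb P L X t).
Proof.
move=> sP sX; apply: submod_addsub => //; split.
  by exists (fun _ => 0); split=> [l|]; [apply: submod0 | rewrite big1 // => l _; rewrite scaler0].
split.
  move=> _ _ [xs [hxs ->]] [ys [hys ->]]; exists (fun l => xs l + ys l); split.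
    by move=> l; apply: submodD.
  by rewrite -big_split; apply: eq_bigr => l _; rewrite scalerDr.
move=> c _ [xs [hxs ->]]; exists (fun l => c *: xs l); split; first by move=> l; apply: submodZ.
by rewrite scaler_sumr; apply: eq_bigr => l _; rewrite !scalerA mulrC.
Qed.

Lemma addsub_lincombS P L X t : submodule X ->
  subp (addsub_lincomb P L X t) (addsub_lincomb P L X t.+1).
Proof.
move=> sX _ [r [_ [Pr [[xs [hxs ->]] ->]]]]; exists r, (\sum_(l < t) L`_l *: xs l).
split=> //; split=> //; exists (fun l => if l == t then 0 else xs l); split.
  by move=> l; case: ifP => _ //; apply: submod0.
rewrite big_ord_recr /= eqxx scaler0 addr0; apply: eq_bigr => l _.
by rewrite ifN // neq_ltn ltn_ord.
Qed.

(* Modulo [J^(k+1) Y], [J^k X] is the sum of the [L_j X] over the monomials [L_j] of degree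
   [k], and multiplication by [L_j] maps [X / J Y] onto the [j]-th step of that sum. *)
Lemma length_le_idealpow a k X Y v : submodule X -> submodule Y ->
  subp (modprod (gen_ideal a) Y) X -> length_le (modprod (gen_ideal a) Y) X v ->
  length_le (modprod (idealpow (gen_ideal a) k.+1) Y) (modprod (idealpow (gen_ideal a) k) X)
            (size (monomials k a) * v).
Proof.
move=> sX sY JYX hv; set J := gen_ideal a; set L := monomials k a.
set R := modprod (idealpow J k.+1) Y; pose T := addsub_lincomb R L X.
have sR : submodule R := submodule_modprod Y (ideal_idealpow k.+1 (ideal_gen_ideal a)).
have T0R : subp (T 0%N) R by move=> _ [r [_ [Rr [[xs [_ ->]] ->]]]]; rewrite big_ord0 addr0.
have JkXT : subp (modprod (idealpow J k) X) (T (size L)).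
  apply: modprod_min => [|p x Jkp Xx]; first exact: submodule_addsub_lincomb.
  have /gen_idealP[f ->] := idealpow_gen_ideal_monomials Jkp.
  exists 0, (\sum_(i < size L) f i * L`_i *: x); rewrite add0r scaler_suml.
  split; first exact: submod0.
  split=> //; exists (fun i => f i *: x); split=> [l|]; first exact: submodZ.
  by apply: eq_bigr => i _; rewrite scalerA mulrC.
apply: length_le_mono T0R JkXT _.
have -> : (size L * v = \sum_(j < size L) v)%N by rewrite sum_nat_const card_ord.
apply: length_le_telescope => [t | t _ | j hj]; first exact: submodule_addsub_lincomb.
  exact: addsub_lincombS.
apply: (length_le_scale (c := L`_j) sX JYX) hv.
  have JYR : subp (modprod J Y) (fun y => R (L`_j *: y)).
    apply: modprod_min => [|p y Jp Yy]; first exact: submod_preimZ.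
    rewrite scalerA mulrC; apply: modprod_mem => //.
    by apply: idealprod_mul => //; apply: monomials_idealpow; apply: mem_nth.
  move=> y /JYR Rjy; exists (L`_j *: y), 0; rewrite addr0; split=> //; split=> //.
  by exists (fun _ => 0); split=> [l|]; [apply: submod0 | rewrite big1 // => l _; rewrite scaler0].
move=> _ [r [_ [Rr [[xs [hxs ->]] ->]]]]; exists (xs j), (r + \sum_(l < j) L`_l *: xs l).
split=> //; last by rewrite big_ord_recr /= addrA addrC.
by exists r, (\sum_(l < j) L`_l *: xs l); split=> //; split=> //; exists xs.
Qed.

Lemma length_le_sally_component a (F : nat -> M -> Prop) (v : nat -> nat) n :
  (forall j, submodule (F j)) -> (forall j, subp (modprod (gen_ideal a) (F j)) (F j.+1)) ->
  (forall j, (1 <= j)%N -> length_le (modprod (gen_ideal a) (F j)) (F j.+1) (v j)) ->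
  length_le (modprod (idealpow (gen_ideal a) n) (F 1%N)) (F n.+1)
            (\sum_(j < n) size (monomials (n - j.+1) a) * v j.+1).
Proof.
move=> sF JF hv; pose R j := modprod (idealpow (gen_ideal a) (n - j)) (F j.+1).
have sR j : submodule (R j) by apply/submodule_modprod/ideal_idealpow/ideal_gen_ideal.
apply: (@length_le_mono _ _ (R 0%N) (R n)); first by rewrite /R subn0.
  by move=> x Fx; rewrite /R subnn -[x]scale1r; apply: modprod_mem.
apply: (length_le_telescope (b := fun j => size (monomials (n - j.+1) a) * v j.+1)%N) => // j jn.
  by rewrite /R -(subnSK jn); apply: modprod_idealpowS.
by rewrite /R -(subnSK jn); apply: length_le_idealpow; [| | apply: JF | apply: hv].
Qed.

End ModuleProducts.

Definition psum (f : nat -> int) (n : nat) : int := \sum_(i < n.+1) f i.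

Definition dif (f : nat -> int) (n : nat) : int := f n - (if n is n'.+1 then f n' else 0).

(* [polyconv p f n] is the [n]-th coefficient of [p(z) * \sum_n f n z^n]. *)
Definition polyconv (p : {poly int}) (f : nat -> int) (n : nat) : int :=
  \sum_(i < n.+1) p`_i * f (n - i)%N.

Lemma psumS f n : psum f n.+1 = psum f n + f n.+1.
Proof. by rewrite /psum big_ord_recr. Qed.

Lemma difK : cancel dif psum.
Proof.
move=> f; apply: functional_extensionality; elim=> [|n IH].
  by rewrite /psum /dif big_ord1 subr0.
by rewrite psumS IH /dif addrC subrK.
Qed.

Lemma iter_difK d : cancel (iter d dif) (iter d psum).
Proof. by elim: d => [|d IH] f //; rewrite iterSr iterS difK IH. Qed.

Lemma iter_psumB d f g :
  iter d psum (fun n => f n - g n) = (fun n => iter d psum f n - iter d psum g n).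
Proof.
elim: d => [|d IH] //=; rewrite IH; apply: functional_extensionality => n.
by rewrite /psum sumrB.
Qed.

Lemma polyconv1 f : polyconv 1 f = f.
Proof.
apply: functional_extensionality => n.
rewrite /polyconv big_ord_recl coef1 mul1r subn0 big1 ?addr0 // => i _.
by rewrite coef1 mul0r.
Qed.

Lemma polyconv_1X p f : polyconv ((1 - 'X) * p) f = dif (polyconv p f).
Proof.
apply: functional_extensionality => n; rewrite /polyconv /dif.
under eq_bigr do rewrite mulrBl mul1r coefB coefXM mulrBl.
rewrite sumrB [X in _ - X]big_ord_recl /= mul0r add0r.
case: n => [|n]; first by rewrite big_ord0 subr0.
by congr (_ - _); apply: eq_bigr => i _ /=; rewrite subSS.
Qed.

Lemma polyconv_exp1X d f : polyconv ((1 - 'X) ^+ d) f = iter d dif f.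
Proof. by elim: d => [|d IH]; rewrite ?expr0 ?polyconv1 // exprS polyconv_1X IH. Qed.

Definition seqconv (c f : nat -> int) (n : nat) : int := \sum_(j < n.+1) c (n - j)%N * f j.

Lemma seqconv_psum c f : seqconv (psum c) f = psum (seqconv c f).
Proof.
apply: functional_extensionality; elim=> [|n IH].
  by rewrite /seqconv /psum !big_ord1.
rewrite psumS -IH /seqconv big_ord_recr [X in _ = _ + X]big_ord_recr /= !subnn.
rewrite addrA -big_split /= [psum c 0]/psum big_ord1; congr (_ + _).
by apply: eq_bigr => i _; rewrite subSn ?psumS ?mulrDl // -ltnS.
Qed.

Definition nmonomials (A : comNzRingType) (a : seq A) (k : nat) : int := (size (monomials k a))%:Z.

Lemma nmonomials_cons (A : comNzRingType) (x : A) a : nmonomials (x :: a) = psum (nmonomials a).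
Proof.
apply: functional_extensionality; elim=> [|k IH]; first by rewrite /psum big_ord1.
by rewrite psumS -IH /nmonomials monomialsS size_cat size_map PoszD.
Qed.

Lemma seqconv_nmonomials (A : comNzRingType) (a : seq A) f :
  seqconv (nmonomials a) f = iter (size a) psum f.
Proof.
elim: a => [|x a IH]; last by rewrite nmonomials_cons seqconv_psum IH.
apply: functional_extensionality => n; rewrite /seqconv big_ord_recr subnn /= mul1r.
rewrite big1 ?add0r // => i _.
have : (0 < n - i)%N by rewrite subn_gt0.
by case: (n - i)%N => [|m] // _; rewrite mul0r.
Qed.

Lemma psum_le_neg1 f K : (forall n, (K <= n)%N -> f n <= -1) ->
  exists K', forall n, (K' <= n)%N -> psum f n <= -1.
Proof.
move=> fK; have psum_drop m : psum f (K + m) <= psum f K - m%:Z.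
  elim: m => [|m IH]; first by rewrite addn0 subr0.
  rewrite addnS psumS; have := fK (K + m.+1)%N (leq_addr _ _); rewrite addnS; lia.
exists (K + `|psum f K|%N + 1)%N => n Kn.
have := psum_drop (n - K)%N; rewrite subnKC; last by lia.
have : psum f K <= `|psum f K|%N by rewrite abszE ler_norm.
have : (`|psum f K|%N + 1 <= n - K)%N by lia.
lia.
Qed.

(* If the total sum were negative, [psum D] would eventually stay below [-1], and so would
   all further iterated partial sums. *)
Lemma sum_ge0_of_iter_psum_ge0 (D : nat -> int) K d : (forall n, (K <= n)%N -> D n = 0) ->
  (forall n, 0 <= iter d psum D n) -> 0 <= \sum_(i < K) D i.
Proof.
move=> DK; case: d => [|d] pos; first by apply: sumr_ge0 => i _; apply: pos.
rewrite leNgt; apply/negP => sum_lt0.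
have psumD n : (K <= n)%N -> psum D n <= -1.
  move=> Kn; rewrite /psum -(subnKC (leqW Kn)) big_split_ord /= [X in _ + X]big1 ?addr0.
    by rewrite -ltzD1 addrC subrr.
  by move=> i _; apply: DK; apply: leq_addr.
have [K' K'd] : exists K', forall n, (K' <= n)%N -> iter d psum (psum D) n <= -1.
  by elim: d {pos} => [|e [K' IH]]; [exists K | apply: psum_le_neg1 IH].
by have := pos K'; rewrite iterSr; have := K'd K' (leqnn _); lia.
Qed.

Lemma sum_nat_unbounded (v : nat -> nat) : ~ (exists K, forall j, (K <= j)%N -> v j = 0%N) ->
  forall m, exists N, (m <= \sum_(1 <= j < N) v j)%N.
Proof.
move=> nz m; suff [N [_ mN]] : exists N, (0 < N)%N /\ (m <= \sum_(1 <= j < N) v j)%N.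
  by exists N.
elim: m => [|m [N [N_gt0 mN]]]; first by exists 1%N.
have [j [Nj vj]] : exists j, (N <= j)%N /\ v j <> 0%N.
  by apply: NNPP => hj; apply: nz; exists N => j Nj; apply: NNPP => vj; apply: hj; exists j.
exists j.+1; split=> //.
by rewrite (@big_cat_nat _ _ _ N 1 j.+1 _ _ N_gt0 (leqW Nj)) big_nat_recr //=; lia.
Qed.

(* The coefficients of [\sum_(j >= 1) v_j z^j]. *)
Definition vseq (v : nat -> nat) (n : nat) : int := if n is 0 then 0 else (v n)%:Z.

Lemma sum_vseq v N : \sum_(i < N) vseq v i = \sum_(1 <= j < N) (v j)%:Z.
Proof.
case: N => [|N]; first by rewrite big_ord0 big_geq.
rewrite -(big_mkord xpredT) big_ltn //= add0r.
by apply: eq_big_nat => -[].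
Qed.

Lemma horner1_le_partial_sum d (h : {poly int}) (v : nat -> nat) :
  (forall n, 0 <= iter d psum (fun k => vseq v k - h`_k) n) ->
  exists N, h.[1] <= \sum_(1 <= j < N) (v j)%:Z.
Proof.
move=> pos; have [[K vK] | nz] := classic (exists K, forall j, (K <= j)%N -> v j = 0%N).
  exists (maxn K (size h)); rewrite -sum_vseq (horner_coef_wide _ (leq_maxr K _)).
  under eq_bigr do rewrite expr1n mulr1.
  rewrite -subr_ge0 -sumrB; apply: sum_ge0_of_iter_psum_ge0 pos => n.
  rewrite geq_max => /andP[Kn hn]; rewrite nth_default // subr0.
  by case: n Kn {hn} => // n /vK /= ->.
have [N hN] := sum_nat_unbounded nz `|h.[1]|%N.
exists N; apply: le_trans (ler_norm _) _.
by rewrite -abszE -(big_morph Posz PoszD (erefl 0%:Z)) lez_nat.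
Qed.

Lemma gen_ideal_sub_of_superficial (A : comNzRingType) (M : lmodType A) (q : A -> Prop)
    (F : nat -> M -> Prop) (a : seq A) :
  ideal q -> superficial_seq q F a -> subp (gen_ideal a) q.
Proof.
move=> iq sup; apply: gen_ideal_min => // y ay.
by rewrite -(nth_index 0 ay); case: (sup (index y a)); rewrite ?index_mem.
Qed.

Lemma sally_length_le_iter_psum (A : comNzRingType) (M : lmodType A) (a : seq A)
    (F : nat -> M -> Prop) (lam v : nat -> nat) n :
  (forall j, submodule (F j)) -> (forall j, subp (modprod (gen_ideal a) (F j)) (F j.+1)) ->
  lam 0%N = 0%N ->
  (forall n, (1 <= n)%N ->
     length_eq (F n.+1) (modprod (idealpow (gen_ideal a) n) (F 1%N)) (lam n)) ->
  (forall j, (1 <= j)%N -> length_eq (F j.+1) (modprod (gen_ideal a) (F j)) (v j)) ->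
  (lam n)%:Z <= iter (size a) psum (vseq v) n.
Proof.
move=> sF JF lam0 hlam hv; rewrite -seqconv_nmonomials /seqconv big_ord_recl mulr0 add0r.
case: n => [|n]; first by rewrite lam0 big_ord0.
have hv' j : (1 <= j)%N -> length_le (modprod (gen_ideal a) (F j)) (F j.+1) (v j).
  move=> j_gt0; apply: length_le_of_length_eq (hv j j_gt0) => //.
  exact/submodule_modprod/ideal_gen_ideal.
have [chain _] := hlam n.+1 isT.
have := length_le_sally_component sF JF hv' (chain_between_of_schain chain).
rewrite -lez_nat => /le_trans-> //.
rewrite (big_morph Posz PoszD (erefl 0%:Z)) le_eqVlt; apply/predU1P; left.
by apply: eq_bigr => j _; rewrite PoszM.
Qed.

Theorem theorem3p1 (A : comNzRingType) (m q : A -> Prop) (M : lmodType A)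
  (d : nat) (F : nat -> M -> Prop) (a : seq A)
  (lam v : nat -> nat) (h : {poly int}) :
  noetherian A -> local_ring m -> infinite_residue m ->
  m_primary m q ->
  fin_gen M -> module_dim_eq M d ->
  good_qfiltration q F ->
  size a = d -> superficial_seq q F a ->
  sally_dim_eq (gen_ideal a) F d ->
  lam 0%N = 0%N ->
  (forall n, (1 <= n)%N ->
     length_eq (F n.+1) (modprod (idealpow (gen_ideal a) n) (F 1%N)) (lam n)) ->
  (forall k, h`_k = \sum_(i < k.+1) ((1 - 'X) ^+ d : {poly int})`_i * (lam (k - i)%N)%:Z) ->
  (forall j, (1 <= j)%N -> length_eq (F j.+1) (modprod (gen_ideal a) (F j)) (v j)) ->
  exists N : nat, h.[1] <= \sum_(1 <= j < N) (v j)%:Z.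
Proof.
move=> _ _ _ [[iq _] _] _ _ [[_ [sF [_ qF]]] _] <- sup _ lam0 hlam hh hv.
have JF j : subp (modprod (gen_ideal a) (F j)) (F j.+1).
  exact: subp_trans (modprod_mono (gen_ideal_sub_of_superficial iq sup)) (qF j).
have hL : iter (size a) psum (fun k => h`_k) = fun n => (lam n)%:Z.
  have -> : (fun k => h`_k) = iter (size a) dif (fun n => (lam n)%:Z).
    by apply: functional_extensionality => k; rewrite hh -polyconv_exp1X.
  exact: iter_difK.
apply: (horner1_le_partial_sum (d := size a)) => n.
by rewrite iter_psumB hL subr_ge0; apply: sally_length_le_iter_psum.
Qed.
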